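(* Let $n\ge1$ and $N\ge n$. (i) For every integer $c$ with $0\le c\le\lfloor n/2\rfloor$, the dimension of the space of $S_n$-invariant homogeneous polynomials of degree $c$ on $\mathbb R^{n\times n}$ equals the dimension of the space of $S_N$-invariant homogeneous polynomials of degree $c$ on $\mathbb R^{N\times N}$. (ii) For every integer $c$ with $0\le c\le\lfloor n/2\rfloor-1$, the dimension of the space of $S_n$-equivariant polynomial maps $\mathbb R^{n\times n}\to\mathbb R^{n\times n}$ with homogeneous components of degree $c$ equals the corresponding dimension for $S_N$ acting on $\mathbb R^{N\times N}$.
   Context: $S_n$ acts on $\mathbb R^{n\times n}$ by $(g\cdot X)_{ij}=X_{g^{-1}(i),g^{-1}(j)}$. A polynomial $p$ is invariant if $p(g\cdot X)=p(X)$ for all $g$; a polynomial map $P$ is equivariant if $P(g\cdot X)=g\cdot P(X)$ for all $g$. *)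

From mathcomp Require Import all_boot all_order all_algebra all_fingroup.
From mathcomp Require Import mpoly.
From mathcomp Require Import reals.
Set Implicit Arguments. Unset Strict Implicit. Unset Printing Implicit Defensive.
Import GRing.Theory.
Local Open Scope ring_scope.

(* Variables of a polynomial on n x n matrices: one variable X_(i,j) per entry,
   indexed by the finite type 'I_n * 'I_n (through enum_rank). *)
Definition nvar (n : nat) : nat := #|{: 'I_n * 'I_n}|.
Definition var_of (n : nat) (i j : 'I_n) : 'I_(nvar n) := enum_rank (i, j).

Definition matpoly (R : realType) (n : nat) := {mpoly R[nvar n]}.

(* The substitution X_(i,j) |-> X_(g^-1 i, g^-1 j): for a polynomial p,
   act_poly g p is the polynomial X |-> p (g . X), where
   (g . X)_(i,j) = X_(g^-1 i, g^-1 j). *)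
Definition subst_tuple (R : realType) (n : nat) (g : 'S_n) :
  (nvar n).-tuple {mpoly R[nvar n]} :=
  [tuple 'X_(let ij := enum_val k in var_of (g^-1 ij.1)%g (g^-1 ij.2)%g)
   | k < nvar n].
Definition act_poly (R : realType) (n : nat) (g : 'S_n) (p : matpoly R n)
  : matpoly R n := p \mPo subst_tuple R g.

Definition inv_hom (R : realType) (n c : nat) (p : matpoly R n) : Prop :=
  p \is c.-homog /\ forall g : 'S_n, act_poly g p = p.

Definition polymap (R : realType) (n : nat) := {ffun 'I_n * 'I_n -> matpoly R n}.

(* S_n-equivariant polynomial maps whose components are homogeneous of degree c:
   P (g . X) = g . P(X), i.e. P_(i,j)(g . X) = P_(g^-1 i, g^-1 j)(X). *)
Definition equiv_hom (R : realType) (n c : nat) (P : polymap R n) : Prop :=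
  (forall ij, P ij \is c.-homog) /\
  forall (g : 'S_n) (i j : 'I_n), act_poly g (P (i, j)) = P ((g^-1 i)%g, (g^-1 j)%g).

Definition has_dim (R : realType) (V : lmodType R) (S : V -> Prop) (d : nat) : Prop :=
  exists b : 'I_d -> V,
    [/\ forall i, S (b i),
        (forall a : 'I_d -> R, \sum_(i < d) a i *: b i = 0 -> forall i, a i = 0) &
        (forall v, S v -> exists a : 'I_d -> R, v = \sum_(i < d) a i *: b i)].

(* A homogeneous polynomial of degree c on n x n matrices is determined by its
   coefficients on the monomials X^m, m an n x n exponent matrix of total degree c,
   and it is S_n-invariant iff these coefficients are constant on S_n-orbits of
   exponent matrices; likewise an equivariant map is a function of (output entry,
   exponent matrix) constant on S_n-orbits. So both dimensions count orbits of
   configurations: an exponent matrix, possibly with a marked entry. A configuration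
   of degree c involves at most 2c indices, plus 2 for the mark. When this is at
   most n, every S_N-orbit contains configurations supported in {0, ..., n-1}, and
   two of these are S_N-conjugate iff they are S_n-conjugate, since a conjugating
   permutation only matters on the support and can be restricted to it. Hence the
   orbits for n and for N are in bijection. *)

From mathcomp Require Import all_boot all_order all_algebra all_fingroup.
From mathcomp Require Import mpoly.
From mathcomp Require Import reals.
Set Implicit Arguments. Unset Strict Implicit. Unset Printing Implicit Defensive.
Import GRing.Theory.

Lemma perm_extend (T : finType) (s : seq T) (f : T -> T) :
  {in s &, injective f} -> exists p : {perm T}, {in s, p =1 f}.
Proof.
elim: s => [|a s IHs] f_inj; first by exists 1%g.
have [|p pE] := IHs; first by move=> x y xs ys; apply: f_inj; rewrite inE ?xs ?ys orbT.
have [a_s|a_s] := boolP (a \in s).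
  by exists p => x; rewrite inE => /predU1P [->|]; apply: pE.
exists (p * tperm (p a) (f a))%g => x; rewrite inE permM => /predU1P [->|xs].
  by rewrite tpermL.
have xa : x != a by apply: contraNneq a_s => <-.
have fxa : f x != f a.
  by apply: contra xa => /eqP /f_inj; rewrite !inE eqxx xs orbT => /(_ isT isT) ->.
rewrite (pE x xs) tpermD // 1?eq_sym //.
by rewrite -(pE x xs) (inj_eq perm_inj).
Qed.

Section ClassFunctions.
Local Open Scope ring_scope.
Variables (R : realType) (V : lmodType R) (T K : finType).
Variables (coord : (T -> R) -> V) (cl : T -> K).
Hypothesis coord_ext : forall f g, f =1 g -> coord f = coord g.
Hypothesis coord_sum : forall (d : nat) (a : 'I_d -> R) (F : 'I_d -> T -> R),
  coord (fun t => \sum_(i < d) a i * F i t) = \sum_(i < d) a i *: coord (F i).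
Hypothesis coord_eq0 : forall f, coord f = 0 -> f =1 (fun=> 0).

Lemma has_dim_class_functions (S : V -> Prop) :
  (forall v, S v <-> exists2 f, v = coord f & forall t t', cl t = cl t' -> f t = f t') ->
  has_dim S #|[set cl t | t in T]|.
Proof.
move=> SE; set I := [set cl t | t in T].
have clI t : cl t \in I by apply: imset_f.
pose rank t := enum_rank_in (clI t) (cl t).
have rankE t k : (cl t == enum_val k) = (rank t == k).
  apply/eqP/eqP => [tk|<-]; last by rewrite enum_rankK_in.
  by apply/enum_val_inj; rewrite enum_rankK_in.
have sum_ind (a : 'I_#|I| -> R) t :
    \sum_(k < #|I|) a k * (cl t == enum_val k)%:R = a (rank t).
  rewrite (bigD1 (rank t)) //= rankE eqxx mulr1 big1 ?addr0 // => k.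
  by rewrite rankE eq_sym => /negbTE ->; rewrite mulr0.
exists (fun k => coord (fun t => (cl t == enum_val k)%:R)); split.
- by move=> k; apply/SE; exists (fun t => (cl t == enum_val k)%:R) => // t t' ->.
- move=> a /(etrans (coord_sum _ _))/coord_eq0 a0 k.
  have /imsetP [t _ tk] := enum_valP k.
  have := a0 t; rewrite /= sum_ind; congr (a _ = 0).
  by apply/eqP; rewrite -rankE tk.
- move=> v /SE [f -> fE].
  exists (fun k => if [pick t | cl t == enum_val k] is Some t then f t else 0).
  rewrite -coord_sum; apply: coord_ext => t; rewrite sum_ind.
  case: pickP => [t' /eqP t'E|/(_ t)]; last by rewrite rankE eqxx.
  by apply: fE; rewrite t'E enum_rankK_in.
Qed.

End ClassFunctions.

Section MatrixMonomials.
Variable n : nat.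
Implicit Types (m : 'X_{1..nvar n}) (g h : 'S_n).

Definition mentry m (i j : 'I_n) : nat := m (var_of i j).

Definition mnm_of_entries (F : 'I_n -> 'I_n -> nat) : 'X_{1..nvar n} :=
  [multinom F (enum_val k).1 (enum_val k).2 | k < nvar n].

Lemma mentry_of_entries F i j : mentry (mnm_of_entries F) i j = F i j.
Proof. by rewrite /mentry mnmE /var_of enum_rankK. Qed.

Lemma mentry_inj m m' : (forall i j, mentry m i j = mentry m' i j) -> m = m'.
Proof.
move=> mm'; apply/mnmP=> k; have := mm' (enum_val k).1 (enum_val k).2.
by rewrite /mentry /var_of -surjective_pairing enum_valK.
Qed.

Lemma mdeg_mentry m : mdeg m = (\sum_i \sum_j mentry m i j)%N.
Proof.
rewrite mdegE pair_bigA /= (reindex (@enum_rank _)) /=; last first.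
  by exists enum_val => x _; [rewrite enum_rankK | rewrite enum_valK].
by apply: eq_bigr => -[i j].
Qed.

Definition var_perm_fun g (k : 'I_(nvar n)) : 'I_(nvar n) :=
  var_of (g^-1 (enum_val k).1)%g (g^-1 (enum_val k).2)%g.

Lemma var_perm_fun_inj g : injective (var_perm_fun g).
Proof.
move=> k k' /enum_rank_inj [/perm_inj E1 /perm_inj E2].
by apply: enum_val_inj; rewrite [enum_val k]surjective_pairing E1 E2 -surjective_pairing.
Qed.

Definition var_perm g : 'S_(nvar n) := perm (@var_perm_fun_inj g).

Definition mnm_act g m : 'X_{1..nvar n} := [multinom m (var_perm g k) | k < nvar n].

Lemma mentry_mnm_act g m i j : mentry (mnm_act g m) i j = mentry m (g^-1 i)%g (g^-1 j)%g.
Proof. by rewrite /mentry mnmE permE /var_perm_fun /var_of enum_rankK. Qed.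

Lemma mdeg_mnm_act g m : mdeg (mnm_act g m) = mdeg m.
Proof. exact: mdeg_mperm. Qed.

Lemma mnm_actM g h m : mnm_act h (mnm_act g m) = mnm_act (g * h)%g m.
Proof. by apply: mentry_inj => i j; rewrite !mentry_mnm_act invMg !permM. Qed.

Lemma mnm_act1 m : mnm_act 1%g m = m.
Proof. by apply: mentry_inj => i j; rewrite mentry_mnm_act invg1 !perm1. Qed.

Lemma mcoeff_act_poly (R : realType) g (p : matpoly R n) m :
  ((act_poly g p)@_m = p@_(mnm_act g m))%R.
Proof.
suff -> : act_poly g p = msym (var_perm g) p by rewrite mcoeff_sym.
rewrite -[msym _ p]comp_mpoly_id msym_mPo /act_poly; congr (_ \mPo _).
by apply: eq_from_tnth => k; rewrite !tnth_map !tnth_ord_tuple permE.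
Qed.

End MatrixMonomials.

Section HomogeneousCoordinates.
Variables (R : realType) (n c : nat).
Local Open Scope ring_scope.

(* The bound c.+1 only serves to make the type of exponents of degree c finite. *)
Definition dmnm : finType := {m : bmultinom (nvar n) c.+1 | mdeg m == c}.

Definition dmnm_val (t : dmnm) : 'X_{1..nvar n} := val (val t).

Lemma dmnm_val_inj : injective dmnm_val.
Proof. by move=> t t' /val_inj /val_inj. Qed.

Lemma mdeg_dmnm t : mdeg (dmnm_val t) = c.
Proof. exact/eqP/(valP t). Qed.

Lemma dmnm_onto m : mdeg m = c -> exists t, dmnm_val t = m.
Proof.
move=> mc; have mb : (mdeg m < c.+1)%N by rewrite mc.
by exists (exist _ (BMultinom mb) (introT eqP mc)).
Qed.

Definition hpoly (f : dmnm -> R) : matpoly R n :=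
  \sum_t f t *: 'X_[dmnm_val t].

Lemma mcoeff_hpoly f t : (hpoly f)@_(dmnm_val t) = f t.
Proof.
rewrite /hpoly raddf_sum (bigD1 t) //= mcoeffZ mcoeffX eqxx mulr1 big1 ?addr0 //.
by move=> t' t't; rewrite mcoeffZ mcoeffX (inj_eq dmnm_val_inj) (negbTE t't) mulr0.
Qed.

Lemma mcoeff_hpoly_out f m : mdeg m != c -> (hpoly f)@_m = 0.
Proof.
move=> mc; rewrite /hpoly raddf_sum big1 // => t _.
rewrite /= mcoeffZ mcoeffX; have [tm|] := eqVneq (dmnm_val t) m; last by rewrite mulr0.
by rewrite -tm mdeg_dmnm eqxx in mc.
Qed.

Lemma hpoly_homog f : hpoly f \is c.-homog.
Proof. by apply: rpred_sum => t _; rewrite rpredZ // dhomogX; apply/eqP/mdeg_dmnm. Qed.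

Lemma eq_hpoly f g : f =1 g -> hpoly f = hpoly g.
Proof. by move=> fg; apply: eq_bigr => t _; rewrite fg. Qed.

Lemma hpoly_sum (d : nat) (a : 'I_d -> R) (F : 'I_d -> dmnm -> R) :
  hpoly (fun t => \sum_(i < d) a i * F i t) = \sum_(i < d) a i *: hpoly (F i).
Proof.
rewrite /hpoly; under eq_bigr do rewrite scaler_suml.
rewrite exchange_big /=; apply: eq_bigr => i _.
by rewrite scaler_sumr; apply: eq_bigr => t _; rewrite scalerA.
Qed.

Lemma act_hpoly g (f f' : dmnm -> R) :
  (forall t t', dmnm_val t' = mnm_act g (dmnm_val t) -> f' t = f t') ->
  act_poly g (hpoly f) = hpoly f'.
Proof.
move=> ff'; apply/mpolyP => m; rewrite mcoeff_act_poly.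
have [/dmnm_onto [t <-]|mc] := eqVneq (mdeg m) c; last first.
  by rewrite !mcoeff_hpoly_out ?mdeg_mnm_act.
have [t' t'E] := dmnm_onto (etrans (mdeg_mnm_act g _) (mdeg_dmnm t)).
by rewrite -t'E !mcoeff_hpoly (ff' t t').
Qed.

Lemma hpoly_eq0 f : hpoly f = 0 -> f =1 (fun=> 0).
Proof. by move=> f0 t; rewrite -mcoeff_hpoly f0 mcoeff0. Qed.

Lemma homog_hpolyE (p : matpoly R n) : p \is c.-homog ->
  p = hpoly (fun t => p@_(dmnm_val t)).
Proof.
move=> p_homog; apply/mpolyP => m.
have [/dmnm_onto [t <-]|mc] := eqVneq (mdeg m) c; first by rewrite mcoeff_hpoly.
by rewrite mcoeff_hpoly_out // (dhomog_nemf_coeff p_homog).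
Qed.

End HomogeneousCoordinates.

Section Dimensions.
Variables (R : realType) (n c : nat) (K : finType).
Local Open Scope ring_scope.

Lemma has_dim_inv_hom (cl : dmnm n c -> K) :
  (forall t t', cl t = cl t' <->
     exists g : 'S_n, dmnm_val t' = mnm_act g (dmnm_val t)) ->
  has_dim (@inv_hom R n c) #|[set cl t | t in dmnm n c]|.
Proof.
move=> clE; apply: (has_dim_class_functions (@eq_hpoly R n c)
  (@hpoly_sum R n c) (@hpoly_eq0 R n c)) => p; split.
- case=> p_homog p_inv; exists (fun t => p@_(dmnm_val t)); first exact: homog_hpolyE.
  by move=> t t' /clE [g ->]; rewrite -mcoeff_act_poly p_inv.
- case=> f -> f_cl; split=> [|g]; first exact: hpoly_homog.
  by apply: act_hpoly => t t' t'E; apply/f_cl/clE; exists g.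
Qed.

Definition entry_dmnm : finType := ('I_n * 'I_n * dmnm n c)%type.

Definition hpolymap (F : entry_dmnm -> R) : polymap R n :=
  [ffun ij => hpoly (fun t => F (ij, t))].

Lemma has_dim_equiv_hom (cl : entry_dmnm -> K) :
  (forall x x', cl x = cl x' <-> exists g : 'S_n,
     x'.1 = (g x.1.1, g x.1.2) /\ dmnm_val x'.2 = mnm_act g (dmnm_val x.2)) ->
  has_dim (@equiv_hom R n c) #|[set cl x | x in entry_dmnm]|.
Proof.
move=> clE; apply: (has_dim_class_functions (coord := hpolymap)).
- move=> f g fg; apply/ffunP => ij; rewrite !ffunE.
  by apply: eq_hpoly => t; rewrite fg.
- move=> d a F; apply/ffunP => ij; rewrite sum_ffunE !ffunE hpoly_sum.
  by apply: eq_bigr => i _; rewrite !ffunE.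
- by move=> f /ffunP f0 [ij t]; move: (f0 ij); rewrite !ffunE => /hpoly_eq0.
move=> P; split.
- case=> P_homog P_equiv; exists (fun x => (P x.1)@_(dmnm_val x.2)).
    by apply/ffunP => ij; rewrite ffunE; apply: homog_hpolyE.
  move=> [ij t] [ij' t'] /clE [g /= [-> ->]].
  by rewrite -mcoeff_act_poly P_equiv !permK -surjective_pairing.
- case=> f -> f_cl; split=> [ij|g i j]; first by rewrite ffunE hpoly_homog.
  rewrite !ffunE; apply: act_hpoly => t t' t'E.
  by apply/f_cl/clE; exists g; rewrite /= !permKV.
Qed.

End Dimensions.

Lemma perm_into (T : finType) (A B : {set T}) :
  #|A| <= #|B| -> exists s : {perm T}, s @: A \subset B.
Proof.
move=> AB; pose f x := nth x (enum B) (index x (enum A)).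
have idxA x : x \in enum A -> index x (enum A) < size (enum B).
  by move=> xA; rewrite -cardE; apply: leq_trans AB; rewrite cardE index_mem.
have [|s sE] := @perm_extend _ (enum A) f.
  move=> x y xA yA; rewrite /f [nth y _ _](set_nth_default x) ?idxA //.
  by move/eqP; rewrite nth_uniq ?idxA ?enum_uniq // => /eqP; apply: index_inj.
exists s; apply/subsetP => _ /imsetP [x xA ->].
by rewrite -mem_enum in xA; rewrite sE // -mem_enum mem_nth ?idxA.
Qed.

Section Configurations.
Variable n : nat.
Implicit Types (g h : 'S_n) (m : 'X_{1..nvar n}).

(* A marked entry [Some (i, j)] stands for the (i, j) output coordinate of an
   equivariant map; unmarked configurations are used for invariants. *)
Definition conf : Type := (option ('I_n * 'I_n) * 'X_{1..nvar n})%type.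

Definition cact g (r : conf) : conf :=
  (omap (fun ij => (g ij.1, g ij.2)) r.1, mnm_act g r.2).

Lemma cactM g h r : cact h (cact g r) = cact (g * h)%g r.
Proof. by case: r => [[[i j]|] m]; rewrite /cact /= mnm_actM ?permM. Qed.

Lemma cact1 r : cact 1%g r = r.
Proof. by case: r => [[[i j]|] m]; rewrite /cact /= mnm_act1 ?perm1. Qed.

Definition mark_supp (a : option ('I_n * 'I_n)) : {set 'I_n} :=
  if a is Some ij then [set ij.1; ij.2] else set0.

Definition mnm_supp m : {set 'I_n} :=
  [set i | [exists j, (mentry m i j != 0) || (mentry m j i != 0)]].

Definition csupp (r : conf) : {set 'I_n} := mark_supp r.1 :|: mnm_supp r.2.

Lemma mentry_supp m i j :
  mentry m i j != 0 -> (i \in mnm_supp m) && (j \in mnm_supp m).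
Proof.
by move=> mij; rewrite !inE; apply/andP; split; apply/existsP;
  [exists j; rewrite mij | exists i; rewrite mij orbT].
Qed.

Lemma card_csupp (r : conf) :
  #|csupp r| <= (mdeg r.2).*2 + (if r.1 is Some _ then 2 else 0).
Proof.
apply: leq_trans (_ : _ <= #|mnm_supp r.2| + #|mark_supp r.1|) _.
  by rewrite cardsU addnC leq_subr.
apply: leq_add; last first.
  by case: r.1 => [[i j]|]; rewrite /= ?cards0 // cards2; case: (i != j).
set E := [set ij : 'I_n * 'I_n | mentry r.2 ij.1 ij.2 != 0].
have suppE : mnm_supp r.2 \subset [set ij.1 | ij in E] :|: [set ij.2 | ij in E].
  apply/subsetP => i /[!inE] /existsP [j /orP [mij|mji]]; apply/orP.
    by left; apply/imsetP; exists (i, j); rewrite ?inE.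
  by right; apply/imsetP; exists (j, i); rewrite ?inE.
have cardE : #|E| <= mdeg r.2.
  rewrite mdeg_mentry pair_bigA /= -sum1_card big_mkcond /=.
  by apply: leq_sum => -[i j] _; rewrite inE /=; case: (mentry _ i j).
apply: leq_trans (subset_leq_card suppE) _; rewrite cardsU -addnn.
by apply: leq_trans (leq_subr _ _) _; apply: leq_add;
  apply: leq_trans (leq_imset_card _ _) cardE.
Qed.

Lemma cact_fix_supp g (r : conf) : {in csupp r, g =1 id} -> cact g r = r.
Proof.
case: r => a m gfix; have gVfix i : i \in csupp (a, m) -> (g^-1 i)%g = i.
  by move=> /gfix gi; rewrite -[in LHS]gi permK.
rewrite /cact /=; congr (_, _).
  by case: a gfix {gVfix} => [[i j]|] //= gfix; rewrite !gfix // !inE eqxx ?orbT.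
apply: mentry_inj => i j; rewrite mentry_mnm_act.
have inS k : k \in mnm_supp m -> k \in csupp (a, m) by move=> km; rewrite inE km orbT.
have [mij|/mentry_supp/andP [/inS ? /inS ?]] := eqVneq (mentry m i j) 0; last first.
  by rewrite !gVfix.
have [mgij|/mentry_supp/andP [/inS /gfix gi /inS /gfix gj]] :=
  eqVneq (mentry m (g^-1 i)%g (g^-1 j)%g) 0; first by rewrite mij mgij.
by rewrite -[in RHS](permKV g i) -[in RHS](permKV g j) gi gj.
Qed.

Lemma cact_eq_on_supp g h (r : conf) : {in csupp r, g =1 h} -> cact g r = cact h r.
Proof.
move=> gh; have -> : g = (g * h^-1 * h)%g by rewrite mulgKV.
by rewrite -cactM (cact_fix_supp (g := (g * h^-1)%g)) // => i ir; rewrite permM gh ?permK.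
Qed.

End Configurations.

Lemma csupp_rename n1 n2 (f : 'I_n1 -> 'I_n2) (r1 : conf n1) (r2 : conf n2) :
  r2.1 = omap (fun ij => (f ij.1, f ij.2)) r1.1 ->
  (forall i j, mentry r2.2 (f i) (f j) = mentry r1.2 i j) ->
  (forall I J, mentry r2.2 I J != 0 -> (I \in codom f) && (J \in codom f)) ->
  csupp r2 = f @: csupp r1.
Proof.
case: r1 r2 => [a1 m1] [a2 m2] /= -> mE m2_codom; rewrite /csupp imsetU.
congr (_ :|: _); first by case: a1 => [[i j]|] /=; rewrite ?imset0 // imsetU1 imset_set1.
apply/setP => I; rewrite inE; apply/existsP/imsetP => /= [[J IJ]|[i]].
  have /andP [/codomP [i Ii] /codomP [j Jj]] : (I \in codom f) && (J \in codom f).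
    by case/orP: IJ => /m2_codom // /andP [-> ->].
  by exists i => //; rewrite inE; apply/existsP; exists j; rewrite -!mE -Ii -Jj.
by rewrite inE => /existsP [j ij] ->; exists (f j); rewrite !mE.
Qed.

Lemma csupp_cact n (g : 'S_n) (r : conf n) : csupp (cact g r) = g @: csupp r.
Proof.
apply: csupp_rename => // [i j|I J _]; first by rewrite mentry_mnm_act !permK.
by rewrite -(permKV g I) -(permKV g J) !codom_f.
Qed.

Section Embedding.
Variables (n N : nat) (le_nN : n <= N).
Local Notation w := (widen_ord le_nN).

Lemma widen_ord_inj : injective w.
Proof. by move=> i j /(congr1 val) ij; apply/val_inj. Qed.

(* Extension by zero: each of the two sums has at most one term. *)
Definition mnm_widen (m : 'X_{1..nvar n}) : 'X_{1..nvar N} :=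
  mnm_of_entries (fun I J => \sum_(i | w i == I) \sum_(j | w j == J) mentry m i j).

Definition conf_widen (r : conf n) : conf N :=
  (omap (fun ij => (w ij.1, w ij.2)) r.1, mnm_widen r.2).

Lemma sum_widen_ord_eq (F : 'I_n -> nat) i : \sum_(k | w k == w i) F k = F i.
Proof. by rewrite (big_pred1 i) // => k; rewrite /= (inj_eq widen_ord_inj). Qed.

Lemma sum_widen_ord_out (F : 'I_n -> nat) I :
  I \notin codom w -> \sum_(k | w k == I) F k = 0.
Proof.
by move=> I_out; rewrite big_pred0 // => k; apply: contraNF I_out => /eqP <-; apply: codom_f.
Qed.

Lemma mentry_widen m i j : mentry (mnm_widen m) (w i) (w j) = mentry m i j.
Proof. by rewrite mentry_of_entries !sum_widen_ord_eq. Qed.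

Lemma mentry_widen_codom m I J :
  mentry (mnm_widen m) I J != 0 -> (I \in codom w) && (J \in codom w).
Proof.
rewrite mentry_of_entries; apply: contraR; rewrite negb_and => /orP [I_out|J_out].
  by rewrite sum_widen_ord_out.
by rewrite big1 // => i _; rewrite sum_widen_ord_out.
Qed.

Lemma mdeg_widen m : mdeg (mnm_widen m) = mdeg m.
Proof.
have sum_ord (F : 'I_n -> nat) : \sum_I \sum_(i | w i == I) F i = \sum_i F i.
  rewrite (exchange_big_dep xpredT) //=; apply: eq_bigr => i _.
  by rewrite (big_pred1 (w i)) // => I; rewrite /= eq_sym.
rewrite !mdeg_mentry; under eq_bigr do under eq_bigr do rewrite mentry_of_entries.
under eq_bigr do rewrite exchange_big /=.
by rewrite sum_ord; apply: eq_bigr => i _; apply: sum_ord.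
Qed.

Lemma mnm_widen_unique m (m' : 'X_{1..nvar N}) :
  (forall i j, mentry m' (w i) (w j) = mentry m i j) ->
  (forall I J, mentry m' I J != 0 -> (I \in codom w) && (J \in codom w)) ->
  m' = mnm_widen m.
Proof.
move=> m'E m'_codom; apply: mentry_inj => I J.
have [/andP [/codomP [i ->] /codomP [j ->]]|out] :=
  boolP ((I \in codom w) && (J \in codom w)); first by rewrite m'E mentry_widen.
by rewrite (eqP (contraNT (@m'_codom I J) out))
  (eqP (contraNT (@mentry_widen_codom m I J) out)).
Qed.

Lemma conf_widen_inj : injective conf_widen.
Proof.
move=> [a m] [a' m'] /pair_equal_spec [/= aE mE]; congr (_, _).
  by case: a a' aE => [[i j]|] [[i' j']|] //= [/val_inj -> /val_inj ->].
by apply: mentry_inj => i j; rewrite -!mentry_widen mE.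
Qed.

Lemma csupp_widen r : csupp (conf_widen r) = w @: csupp r.
Proof. by apply: csupp_rename => //; [apply: mentry_widen | apply: mentry_widen_codom]. Qed.

Lemma conf_widen_onto (y : conf N) :
  {subset csupp y <= codom w} -> exists x, conf_widen x = y.
Proof.
case: y => a M ysupp.
have inS I : I \in mnm_supp M -> I \in codom w.
  by move=> IM; apply: ysupp; rewrite inE IM orbT.
have [m mE] : exists m, mnm_widen m = M.
  exists (mnm_of_entries (fun i j => mentry M (w i) (w j))).
  apply/esym/mnm_widen_unique => [i j|I J /mentry_supp /andP [/inS -> /inS ->]] //.
  by rewrite mentry_of_entries.
case: a ysupp => [[P Q]|] ysupp; last by exists (None, m); rewrite /conf_widen mE.
have /codomP [i ->] : P \in codom w by apply: ysupp; rewrite /csupp /= !inE eqxx.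
have /codomP [j ->] : Q \in codom w by apply: ysupp; rewrite /csupp /= !inE eqxx orbT.
by exists (Some (i, j), m); rewrite /conf_widen mE.
Qed.

Lemma widen_perm (g : 'S_n) : exists h : 'S_N, forall i, h (w i) = w (g i).
Proof.
pose f I := if insub (val I) is Some i then w (g i) else I.
have fw i : f (w i) = w (g i) by rewrite /f /= valK.
have [|h hE] := @perm_extend _ (codom w) f.
  move=> _ _ /codomP [i ->] /codomP [j ->].
  by rewrite !fw => /widen_ord_inj /perm_inj ->.
by exists h => i; rewrite hE ?fw ?codom_f.
Qed.

Lemma conf_widen_cact (g : 'S_n) (h : 'S_N) (r : conf n) :
  (forall i, h (w i) = w (g i)) -> conf_widen (cact g r) = cact h (conf_widen r).
Proof.
move=> hw; have hVw i : (h^-1 (w i))%g = w (g^-1 i)%g.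
  by apply: (@perm_inj _ h); rewrite permKV hw permKV.
case: r => a m; rewrite /conf_widen /cact /=; congr (_, _).
  by case: a => [[i j]|] //=; rewrite !hw.
apply/esym/mnm_widen_unique => [i j|I J].
  by rewrite !mentry_mnm_act !hVw mentry_widen.
rewrite mentry_mnm_act => /mentry_widen_codom /andP [/codomP [i iE] /codomP [j jE]].
by rewrite -(permKV h I) -(permKV h J) iE jE !hw !codom_f.
Qed.

Lemma cact_widen_restrict (h : 'S_N) (r r' : conf n) :
  cact h (conf_widen r) = conf_widen r' -> exists g : 'S_n, cact g r = r'.
Proof.
move=> hrr'; have hA i : i \in csupp r -> h (w i) \in codom w.
  move=> ir; have : h (w i) \in csupp (conf_widen r').
    by rewrite -hrr' csupp_cact csupp_widen; do 2!apply: imset_f.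
  by rewrite csupp_widen => /imsetP [j _ ->]; apply: codom_f.
(* [g] is [h] read on the support of [r], extended arbitrarily. *)
pose f i := odflt i (insub (val (h (w i)))).
have fE i : i \in csupp r -> w (f i) = h (w i).
  by move=> /hA /codomP [k kE]; rewrite /f kE /= valK.
have [|g gE] := @perm_extend _ (enum (csupp r)) f.
  move=> i j; rewrite !mem_enum => ir jr /(congr1 w).
  by rewrite !fE // => /perm_inj /widen_ord_inj.
have [h' h'E] := widen_perm g.
exists g; apply: conf_widen_inj; rewrite (conf_widen_cact _ h'E) -hrr'.
apply: cact_eq_on_supp => I; rewrite csupp_widen => /imsetP [i ir ->].
by rewrite h'E gE ?mem_enum ?fE.
Qed.

Lemma cact_into_block (y : conf N) :
  #|csupp y| <= n -> exists h (x : conf n), cact h y = conf_widen x.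
Proof.
move=> small; have [|h hy] := @perm_into _ (csupp y) [set I in codom w].
  by apply: leq_trans small _; rewrite cardsE card_codom ?card_ord //; apply: widen_ord_inj.
have [|x xE] := @conf_widen_onto (cact h y); last by exists h, x.
by move=> I; rewrite csupp_cact => /(subsetP hy); rewrite inE.
Qed.

End Embedding.

Section Orbits.
Variables n c : nat.

Definition dconf : finType := (option ('I_n * 'I_n) * dmnm n c)%type.

Definition dconf_val (x : dconf) : conf n := (x.1, dmnm_val x.2).

Definition corbit (x : dconf) : {set dconf} :=
  [set z | [exists g : 'S_n, cact g (dconf_val x) == dconf_val z]].

Lemma corbit_eq x x' :
  corbit x = corbit x' <-> exists g : 'S_n, dconf_val x' = cact g (dconf_val x).
Proof.
split=> [xx'|[g gx]].
  have : x' \in corbit x' by rewrite inE; apply/existsP; exists 1%g; rewrite cact1.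
  by rewrite -xx' inE => /existsP [g /eqP <-]; exists g.
apply/setP => z; rewrite !inE; apply/existsP/existsP => -[h /eqP hz].
  by exists (g^-1 * h)%g; rewrite gx cactM mulgA mulgV mul1g hz.
by exists (g * h)%g; rewrite -cactM -gx hz.
Qed.

End Orbits.

Section OrbitTraces.
Variables (n N : nat) (le_nN : n <= N) (c : nat).
Local Notation w := (widen_ord le_nN).

(* The S_N-orbit of [y], traced on the configurations of size n, so that orbits
   for n and for N live in the same type. *)
Definition orbit_trace (y : dconf N c) : {set dconf n c} :=
  [set z | [exists h : 'S_N, cact h (dconf_val y) == conf_widen le_nN (dconf_val z)]].

Lemma orbit_trace_widen (y : dconf N c) (x : dconf n c) (h0 : 'S_N) :
  cact h0 (dconf_val y) = conf_widen le_nN (dconf_val x) -> orbit_trace y = corbit x.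
Proof.
move=> yx; apply/setP => z; rewrite !inE.
apply/existsP/existsP => [[h /eqP hyz]|[g /eqP gxz]].
  have [|g gxz] := @cact_widen_restrict _ _ le_nN (h0^-1 * h)%g (dconf_val x) (dconf_val z).
    by rewrite -yx cactM mulgA mulgV mul1g.
  by exists g; rewrite gxz.
have [k kE] := widen_perm le_nN g.
by exists (h0 * k)%g; rewrite -cactM yx -(conf_widen_cact _ kE) gxz.
Qed.

Lemma corbit_as_trace (x : dconf n c) :
  exists2 y : dconf N c, orbit_trace y = corbit x & isSome y.1 = isSome x.1.
Proof.
have [t tE] := dmnm_onto (etrans (mdeg_widen le_nN _) (mdeg_dmnm x.2)).
exists (omap (fun ij => (w ij.1, w ij.2)) x.1, t); last by case: (x.1).
by apply: (orbit_trace_widen (h0 := 1%g)); rewrite cact1 /dconf_val tE.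
Qed.

Lemma orbit_trace_as_corbit (y : dconf N c) :
  c.*2 + (if y.1 is Some _ then 2 else 0) <= n ->
  exists2 x : dconf n c, orbit_trace y = corbit x & isSome x.1 = isSome y.1.
Proof.
move=> small; have [|h [r yr]] := @cact_into_block _ _ le_nN (dconf_val y).
  by apply: leq_trans (card_csupp _) _; rewrite mdeg_dmnm.
have [t tE] : exists t : dmnm n c, dmnm_val t = r.2.
  apply: dmnm_onto; rewrite -(mdeg_widen le_nN) -[mnm_widen _ _]/(conf_widen _ r).2.
  by rewrite -yr mdeg_mnm_act mdeg_dmnm.
exists (r.1, t); first by apply: (orbit_trace_widen (h0 := h)); rewrite yr /dconf_val tE.
move/(congr1 (fun r => isSome r.1)): yr; rewrite /cact /conf_widen /dconf_val /=.
by case: (y.1); case: (r.1).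
Qed.

Lemma orbit_trace_eq (y y' : dconf N c) :
  c.*2 + (if y.1 is Some _ then 2 else 0) <= n ->
  orbit_trace y = orbit_trace y' <->
  exists h : 'S_N, dconf_val y' = cact h (dconf_val y).
Proof.
move=> small; split=> [yy'|[h hy]]; last first.
  apply/setP => z; rewrite !inE; apply/existsP/existsP => -[k /eqP kz].
    by exists (h^-1 * k)%g; rewrite hy cactM mulgA mulgV mul1g kz.
  by exists (h * k)%g; rewrite -cactM -hy kz.
have [x yx _] := orbit_trace_as_corbit small.
have x_in : x \in corbit x by rewrite inE; apply/existsP; exists 1%g; rewrite cact1.
move: (x_in) (x_in); rewrite -{1}yx yy' -yx => /[!inE].
case/existsP=> h' /eqP h'x /existsP [h /eqP hx].
by exists (h * h'^-1)%g; rewrite -cactM hx -h'x cactM mulgV cact1.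
Qed.

End OrbitTraces.

Lemma inv_hom_dim_stable (R : realType) n N c : n <= N -> c.*2 <= n ->
  exists d, has_dim (@inv_hom R n c) d /\ has_dim (@inv_hom R N c) d.
Proof.
move=> le_nN small.
pose cl (t : dmnm n c) := corbit ((None, t) : dconf n c).
pose clN (t : dmnm N c) := orbit_trace le_nN ((None, t) : dconf N c).
have classes_eq : [set cl t | t in dmnm n c] = [set clN t | t in dmnm N c].
  apply/setP => K; apply/imsetP/imsetP => -[t _ ->].
    by have [[[ij|] u] yx //= _] := corbit_as_trace le_nN ((None, t) : dconf n c); exists u.
  have [|[[ij|] u] yx //] := orbit_trace_as_corbit le_nN (y := (None, t) : dconf N c).
    by rewrite addn0.
  by exists u.
exists #|[set cl t | t in dmnm n c]|; split; last rewrite classes_eq;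
  apply: has_dim_inv_hom => t t'; rewrite ?corbit_eq ?orbit_trace_eq ?addn0 //;
  by split=> -[g gE]; exists g; [case: gE | rewrite /dconf_val /cact /= gE].
Qed.

Lemma equiv_hom_dim_stable (R : realType) n N c : n <= N -> c.+1.*2 <= n ->
  exists d, has_dim (@equiv_hom R n c) d /\ has_dim (@equiv_hom R N c) d.
Proof.
move=> le_nN; rewrite doubleS -addn2 => small.
pose cl (x : entry_dmnm n c) := corbit ((Some x.1, x.2) : dconf n c).
pose clN (x : entry_dmnm N c) := orbit_trace le_nN ((Some x.1, x.2) : dconf N c).
have classes_eq : [set cl x | x in entry_dmnm n c] = [set clN x | x in entry_dmnm N c].
  apply/setP => K; apply/imsetP/imsetP => -[[ij t] _ ->].
    have [[[IJ|] u] yx //] := corbit_as_trace le_nN ((Some ij, t) : dconf n c).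
    by exists (IJ, u).
  have [[[ij'|] u] yx //] := orbit_trace_as_corbit le_nN (y := (Some ij, t) : dconf N c) small.
  by exists (ij', u).
exists #|[set cl x | x in entry_dmnm n c]|; split; last rewrite classes_eq;
  apply: has_dim_equiv_hom => -[ij t] [ij' t']; rewrite ?corbit_eq ?orbit_trace_eq //;
  split=> -[g gE]; exists g; first by case: gE => -> ->.
all: by case: gE => -> gE; rewrite /dconf_val /cact /= gE.
Qed.

Theorem mainTheorem10 (R : realType) (n N : nat) :
  (1 <= n)%N -> (n <= N)%N ->
  (forall c : nat, (c <= n./2)%N ->
     exists d : nat, has_dim (@inv_hom R n c) d /\ has_dim (@inv_hom R N c) d) /\
  (forall c : nat, (c.+1 <= n./2)%N ->
     exists d : nat, has_dim (@equiv_hom R n c) d /\ has_dim (@equiv_hom R N c) d).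
Proof.
move=> _ le_nN; split=> c; rewrite geq_half_double.
  exact: inv_hom_dim_stable.
exact: equiv_hom_dim_stable.
Qed.
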